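(* Let $(\mathcal E,B,\mathcal L_{\mathcal P})$ be an epistemic space, $\mathcal S$ a set of agents, and $\Phi\mapsto\succeq_\Phi$ an assignment satisfying Properties 3 and 4. Then the assignment satisfies Property 2 if and only if it satisfies the Maximality Condition.
   Context: An epistemic space: $\mathcal E$ nonempty, $B:\mathcal E\to\mathcal L_{\mathcal P}$ whose image modulo equivalence is exactly the consistent propositional formulas over a finite variable set $\mathcal P$; $\mathcal W_{\mathcal P}$ valuations, $[\![\phi]\!]$ models. Agents: well-ordered set $\mathcal S$; society: nonempty finite $N\subseteq\mathcal S$; $N$-profile: $\Phi:N\to\mathcal E$ with $E_i=\Phi(i)$, identified with $E_i$ when $N=\{i\}$; $\Phi\upharpoonright_M$ restriction; partition $\{N_1,N_2\}$ of $N$: nonempty disjoint sets with union $N$. An assignment maps each profile $\Phi$ to a total preorder $\succeq_\Phi$ on $\mathcal W_{\mathcal P}$ ($\succ$ strict part; $\max(\succeq)$ the set of maximal elements). Properties, for all societies $N$, partitions $\{N_1,N_2\}$, $N$-profiles $\Phi$, interpretations $w,w'$: (2) if $\bigwedge_{i\in N}B(E_i)\nvdash\bot$ then $[\![\bigwedge_{i\in N}B(E_i)]\!]=\max(\succeq_\Phi)$; (3) if $w\succeq_{\Phi\upharpoonright_{N_1}}w'$ and $w\succeq_{\Phi\upharpoonright_{N_2}}w'$ then $w\succeq_\Phi w'$; (4) if $w\succeq_{\Phi\upharpoonright_{N_1}}w'$ and $w\succ_{\Phi\upharpoonright_{N_2}}w'$ then $w\succ_\Phi w'$. Maximality Condition: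 for every agent $i$ and every $i$-profile $E_i$, $[\![B(E_i)]\!]=\max(\succeq_{E_i})$. *)

From mathcomp Require Import all_boot.
From Stdlib Require List.
Set Implicit Arguments. Unset Strict Implicit. Unset Printing Implicit Defensive.

Inductive form (P : finType) : Type :=
| FVar of P
| FTop
| FBot
| FNot of form P
| FAnd of form P & form P
| FOr of form P & form P
| FImp of form P & form P.

Definition valuation (P : finType) := P -> bool.

Fixpoint sat (P : finType) (w : valuation P) (f : form P) : Prop :=
  match f with
  | FVar p => w p = true
  | FTop => True
  | FBot => False
  | FNot g => ~ sat w g
  | FAnd g h => sat w g /\ sat w h
  | FOr g h => sat w g \/ sat w h
  | FImp g h => sat w g -> sat w h
  end.

(** consistency (phi |/- bot) and equivalence, semantically (sound & complete) *)
Definition consistent (P : finType) (f : form P) : Prop := exists w, sat w f.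
Definition form_equiv (P : finType) (f g : form P) : Prop :=
  forall w, sat w f <-> sat w g.

Definition epistemic_space (P : finType) (E : Type) (B : E -> form P) : Prop :=
  inhabited E /\
  (forall e, consistent (B e)) /\
  (forall f, consistent f -> exists e, form_equiv (B e) f).

Definition well_order (S : Type) (lt : S -> S -> Prop) : Prop :=
  well_founded lt /\
  (forall x, ~ lt x x) /\
  (forall x y z, lt x y -> lt y z -> lt x z) /\
  (forall x y, lt x y \/ x = y \/ lt y x).

Definition society (S : Type) (N : S -> Prop) : Prop :=
  (exists l : list S, forall i, N i <-> List.In i l) /\ (exists i, N i).

Definition partition2 (S : Type) (N N1 N2 : S -> Prop) : Prop :=
  (exists i, N1 i) /\ (exists i, N2 i) /\
  (forall i, N1 i -> N2 i -> False) /\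
  (forall i, N i <-> N1 i \/ N2 i).

(** An N-profile is represented by a total function Phi : S -> E, of which
    only the values on N matter; an assignment takes a society N and such a
    Phi, and must not depend on values outside N. Hence restriction of a
    profile Phi to M is just (M, Phi). *)
Definition assignmentT (S E W : Type) := (S -> Prop) -> (S -> E) -> W -> W -> Prop.

Definition total_preorder (W : Type) (R : W -> W -> Prop) : Prop :=
  (forall x y z, R x y -> R y z -> R x z) /\ (forall x y, R x y \/ R y x).

Definition strict (W : Type) (R : W -> W -> Prop) (x y : W) : Prop :=
  R x y /\ ~ R y x.

Definition maxset (W : Type) (R : W -> W -> Prop) (w : W) : Prop :=
  forall w', R w w'.

Definition is_assignment (S E W : Type) (A : assignmentT S E W) : Prop :=
  (forall N Phi, society N -> total_preorder (A N Phi)) /\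
  (forall N Phi Psi, society N -> (forall i, N i -> Phi i = Psi i) ->
     forall w w', A N Phi w w' <-> A N Psi w w').

Definition conj_models (P : finType) (S E : Type) (B : E -> form P)
  (N : S -> Prop) (Phi : S -> E) (w : valuation P) : Prop :=
  forall i, N i -> sat w (B (Phi i)).

Definition property2 (P : finType) (S E : Type) (B : E -> form P)
  (A : assignmentT S E (valuation P)) : Prop :=
  forall N Phi, society N ->
    (exists w, conj_models B N Phi w) ->
    forall w, conj_models B N Phi w <-> maxset (A N Phi) w.

Definition property3 (S E W : Type) (A : assignmentT S E W) : Prop :=
  forall N N1 N2 Phi, society N -> partition2 N N1 N2 ->
    forall w w', A N1 Phi w w' -> A N2 Phi w w' -> A N Phi w w'.

Definition property4 (S E W : Type) (A : assignmentT S E W) : Prop :=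
  forall N N1 N2 Phi, society N -> partition2 N N1 N2 ->
    forall w w', A N1 Phi w w' -> strict (A N2 Phi) w w' ->
      strict (A N Phi) w w'.

Definition single (S : Type) (i : S) : S -> Prop := fun j => j = i.

Definition maximality_condition (P : finType) (S E : Type) (B : E -> form P)
  (A : assignmentT S E (valuation P)) : Prop :=
  forall (i : S) (Phi : S -> E) (w : valuation P),
    sat w (B (Phi i)) <-> maxset (A (single i) Phi) w.

From Stdlib Require Import Classical FunctionalExtensionality PropExtensionality List.
From Pilot Require Import Defs.
From mathcomp Require Import all_boot.
Set Implicit Arguments. Unset Strict Implicit.

(* Societies are built from singletons by disjoint unions, so it suffices to
   show that Property 2 on both blocks of a partition gives Property 2 on the
   whole society.  The models of the conjunction over N are those of both
   blocks; by Property 3 they are maximal for N.  Conversely, if w is maximal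
   for N but not for a block M, a common model w0 is strictly better than w on
   M and at least as good on the other block, so Property 4 makes w0 strictly
   better than w on N, a contradiction. *)

Definition property2_on (P : finType) (S E : Type) (B : E -> form P)
  (A : assignmentT S E (valuation P)) (N : S -> Prop) : Prop :=
  forall Phi, (exists w, conj_models B N Phi w) ->
    forall w, conj_models B N Phi w <-> Defs.maxset (A N Phi) w.

Lemma partition2_sym (S : Type) (N N1 N2 : S -> Prop) :
  partition2 N N1 N2 -> partition2 N N2 N1.
Proof.
move=> [ne1 [ne2 [disj cover]]]; do 3![split=> //].
- by move=> i h2 h1; exact: (disj i h1 h2).
- by move=> i; rewrite cover; tauto.
Qed.

Lemma society_single (S : Type) (a : S) : society (single a).
Proof.
split; last by exists a.
by exists [:: a] => i; rewrite /single /=; split=> [->|[->|[]]]; [left|].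
Qed.

Lemma conj_models_single (P : finType) (S E : Type) (B : E -> form P)
    (a : S) (Phi : S -> E) (w : valuation P) :
  conj_models B (single a) Phi w <-> sat w (B (Phi a)).
Proof. by split=> [H|H i ->]; [exact: H|]. Qed.

Lemma society_ind (S : Type) (Q : (S -> Prop) -> Prop) :
  (forall a, Q (single a)) ->
  (forall N N1 N2, society N -> society N1 -> society N2 ->
     partition2 N N1 N2 -> Q N1 -> Q N2 -> Q N) ->
  forall N, society N -> Q N.
Proof.
move=> Qsingle Qunion N [[l HN] [i Ni]].
elim: l N HN i Ni => [|a l IH] N HN i Ni; first by move: Ni; rewrite HN.
have [al|nal] := classic (In a l).
  apply: (IH _ _ i Ni) => j; rewrite HN /=.
  by split=> [[<-|]|]; [|done|right].
case: l IH HN nal => [|b l] IH HN nal.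
  have -> : N = single a.
    apply: functional_extensionality => j; apply: propositional_extensionality.
    by rewrite HN /single /=; split=> [[]|->]; [|done|left].
  exact: Qsingle.
have sl : society (fun j => In j (b :: l)) by split; [exists (b :: l)|exists b; left].
have sN : society N by split; [exists (a :: b :: l)|exists i].
have pt : partition2 N (single a) (fun j => In j (b :: l)).
  split; [by exists a|split; [by exists b; left|split]].
  - by move=> j ->.
  - by move=> j; rewrite HN /single /=; split=> [[->|]|[->|]]; [left|right|left|right].
apply: (Qunion N _ _ sN (society_single a) sl pt (Qsingle a)).
exact: (IH _ (fun _ => iff_refl _) b (or_introl erefl)).
Qed.

Section Partition.

Variables (P : finType) (S E : Type) (B : E -> form P).
Variable A : assignmentT S E (valuation P).
Hypotheses (assignA : is_assignment A) (p3 : property3 A) (p4 : property4 A).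

Lemma maxset_block (N M' M : S -> Prop) (Phi : S -> E) (w0 w : valuation P) :
  society N -> society M -> partition2 N M' M ->
  Defs.maxset (A M' Phi) w0 -> Defs.maxset (A M Phi) w0 ->
  Defs.maxset (A N Phi) w -> Defs.maxset (A M Phi) w.
Proof.
move=> sN sM pt maxM' maxM maxN w''; apply: NNPP => notww''.
have [transM _] := assignA.1 M Phi sM.
have w0_better : strict (A M Phi) w0 w.
  by split=> [|ww0]; [exact: maxM|apply: notww''; exact: transM ww0 (maxM w'')].
have [_ notw] := p4 sN pt (maxM' w) w0_better.
exact: notw (maxN w0).
Qed.

Lemma property2_on_partition (N N1 N2 : S -> Prop) :
  society N -> society N1 -> society N2 -> partition2 N N1 N2 ->
  property2_on B A N1 -> property2_on B A N2 -> property2_on B A N.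
Proof.
move=> sN sN1 sN2 pt G1 G2 Phi [w0 cw0] w.
have [_ [_ [_ cover]]] := pt.
have restr1 v : conj_models B N Phi v -> conj_models B N1 Phi v.
  by move=> H j Hj; apply: H; rewrite cover; left.
have restr2 v : conj_models B N Phi v -> conj_models B N2 Phi v.
  by move=> H j Hj; apply: H; rewrite cover; right.
have e1 : exists v, conj_models B N1 Phi v by exists w0; exact: restr1.
have e2 : exists v, conj_models B N2 Phi v by exists w0; exact: restr2.
have max1 := (G1 Phi e1 w0).1 (restr1 _ cw0).
have max2 := (G2 Phi e2 w0).1 (restr2 _ cw0).
split=> [cw w'|maxN j Nj].
  by apply: (p3 sN pt); [exact: (G1 Phi e1 w).1 (restr1 _ cw) w'|exact: (G2 Phi e2 w).1 (restr2 _ cw) w'].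
move: (Nj); rewrite cover => -[N1j|N2j].
- apply: ((G1 Phi e1 w).2 _ j N1j).
  exact: maxset_block sN sN1 (partition2_sym pt) max2 max1 maxN.
- apply: ((G2 Phi e2 w).2 _ j N2j).
  exact: maxset_block sN sN2 pt max1 max2 maxN.
Qed.

End Partition.

Theorem mainTheorem6 (P : finType) (E : Type) (B : E -> form P)
  (S : Type) (ltS : S -> S -> Prop)
  (A : assignmentT S E (valuation P)) :
  epistemic_space B -> well_order ltS -> is_assignment A ->
  property3 A -> property4 A ->
  (property2 B A <-> maximality_condition B A).
Proof.
move=> [_ [consB _]] _ assignA p3 p4; split.
- move=> p2 i Phi w; rewrite -(conj_models_single B i).
  apply: p2; first exact: society_single.
  by have [v Hv] := consB (Phi i); exists v; apply/conj_models_single.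
- move=> maxcond N Phi sN.
  apply: (society_ind (Q := property2_on B A) _ _ sN Phi).
  + by move=> a Psi _ w; rewrite conj_models_single; exact: maxcond.
  + exact: property2_on_partition.
Qed.
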